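(* $\mathsf{C}_2\times\mathsf{AUC}_{[0,1]}\not\le_W\mathsf{ConC}_{[0,1]}$.
   Context: A represented space is a pair $(X,\delta_X)$ with $\delta_X:\subseteq\mathbb{N}^\mathbb{N}\to X$ a partial surjection; $[0,1]$ carries its Cauchy representation. A realizer of $f:\subseteq X\rightrightarrows Y$ is a partial $F$ with $\delta_Y F(p)\in f(\delta_X(p))$ for all $p\in\mathrm{dom}(f\circ\delta_X)$. $f\le_W g$ if there are computable partial $H,K:\subseteq\mathbb{N}^\mathbb{N}\to\mathbb{N}^\mathbb{N}$ such that $p\mapsto H\langle p,GK(p)\rangle$ realizes $f$ for every realizer $G$ of $g$. $f\times g$ denotes $(x,z)\mapsto f(x)\times g(z)$. $\mathcal{A}_-(X)$ denotes closed subsets represented by negative information (for $\{0,1\}$: a name enumerates the complement; for $[0,1]$: a name enumerates rational open intervals whose union is the complement). Closed choice $\mathsf C_X:\subseteq\mathcal A_-(X)\rightrightarrows X$, $A\mapsto A$, is defined on nonempty $A$; $\mathsf C_2$ is closed choice on $\{0,1\}$. $\mathsf{AUC}_{[0,1]}$ is $\mathsf C_{[0,1]}$ restricted to the sets $[0,1]$ and $\{x\}$, $x\in[0,1]$. $\mathsf{ConC}_{[0,1]}$ is $\mathsf C_{[0,1]}$ restricted to intervals $[a,b]$, $0\le a\le b\le1$. *)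

From Stdlib Require Import Reals Arith List.
Open Scope R_scope.

Definition Baire := nat -> nat.

Definition cpair (a b : nat) : nat := ((a + b) * (a + b + 1) / 2 + b)%nat.

Fixpoint lcode (l : list nat) : nat :=
  match l with
  | nil => 0%nat
  | x :: l' => S (cpair x (lcode l'))
  end.

Definition prefix (p : Baire) (k : nat) : list nat := map p (seq 0 k).

Definition bpair (p q : Baire) : Baire :=
  fun n => if Nat.even n then p (Nat.div2 n) else q (Nat.div2 n).
Definition bfst (r : Baire) : Baire := fun n => r (2 * n)%nat.
Definition bsnd (r : Baire) : Baire := fun n => r (2 * n + 1)%nat.

Inductive prog : Type :=
| PZero : prog
| PSucc : prog
| PProj : nat -> prog
| PComp : prog -> list prog -> prog
| PPrec : prog -> prog -> prog
| PMin  : prog -> prog.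

Inductive ev : prog -> list nat -> nat -> Prop :=
| ev_zero : forall l, ev PZero l 0
| ev_succ : forall x l, ev PSucc (x :: l) (S x)
| ev_proj : forall i l, (i < length l)%nat -> ev (PProj i) l (nth i l 0%nat)
| ev_comp : forall f gs l ys y, evs gs l ys -> ev f ys y -> ev (PComp f gs) l y
| ev_prec0 : forall b s l y, ev b l y -> ev (PPrec b s) (0%nat :: l) y
| ev_precS : forall b s n l r y,
    ev (PPrec b s) (n :: l) r -> ev s (n :: r :: l) y -> ev (PPrec b s) (S n :: l) y
| ev_min : forall f l n,
    ev f (n :: l) 0 ->
    (forall m, (m < n)%nat -> exists k, ev f (m :: l) (S k)) ->
    ev (PMin f) l n
with evs : list prog -> list nat -> list nat -> Prop :=
| evs_nil : forall l, evs nil l nil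
| evs_cons : forall g gs l y ys, ev g l y -> evs gs l ys -> evs (g :: gs) l (y :: ys).

Definition computable_nat (alpha : nat -> nat) : Prop :=
  exists t : prog, forall n, ev t (n :: nil) (alpha n).

(** * Computable partial functions on Baire space via Kleene associates.
    [kapp alpha p q] : the partial function with associate alpha maps p to q. *)
Definition kapp (alpha : nat -> nat) (p q : Baire) : Prop :=
  forall n, exists k,
    alpha (lcode (n :: prefix p k)) = S (q n) /\
    forall j, (j < k)%nat -> alpha (lcode (n :: prefix p j)) = 0%nat.

(** A represented space: a carrier with a (partial, single-valued) representation
    given as a relation [rep p x] : "p is a name of x". *)
Record space := { pt : Type; rep : Baire -> pt -> Prop }.

(** A partial multi-valued function f :⊆ X ⇉ Y, with dom f = {x | f(x) nonempty}. *)
Record problem := { src : space; tgt : space; rel : pt src -> pt tgt -> Prop }.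

(** A partial function F :⊆ N^N -> N^N is given by its domain D and values F. *)
Definition realizes (f : problem) (D : Baire -> Prop) (F : Baire -> Baire) : Prop :=
  forall p x, rep (src f) p x -> (exists y, rel f x y) ->
    D p /\ exists y, rep (tgt f) (F p) y /\ rel f x y.

Definition Wred (f g : problem) : Prop :=
  exists aH aK : nat -> nat, computable_nat aH /\ computable_nat aK /\
    forall (GD : Baire -> Prop) (G : Baire -> Baire), realizes g GD G ->
      forall p x, rep (src f) p x -> (exists y, rel f x y) ->
        exists r, kapp aK p r /\ GD r /\
          exists s, kapp aH (bpair p (G r)) s /\
            exists y, rep (tgt f) s y /\ rel f x y.

Definition prod_space (X Y : space) : space :=
  {| pt := (pt X * pt Y)%type;
     rep := fun r xy => rep X (bfst r) (fst xy) /\ rep Y (bsnd r) (snd xy) |}.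

Definition prod_problem (f g : problem) : problem :=
  {| src := prod_space (src f) (src g);
     tgt := prod_space (tgt f) (tgt g);
     rel := fun xz yw => rel f (fst xz) (fst yw) /\ rel g (snd xz) (snd yw) |}.

Definition b2n (b : bool) : nat := if b then 1%nat else 0%nat.

Definition two_space : space := {| pt := bool; rep := fun p b => p 0%nat = b2n b |}.

(** A_-({0,1}): a name enumerates the complement (value S i means i is in the
    complement, value 0 means no information). *)
Definition A2_space : space :=
  {| pt := bool -> Prop;
     rep := fun p A => (forall k, (p k <= 2)%nat) /\
                       forall b, ~ A b <-> exists k, p k = S (b2n b) |}.

Definition qval (a b c : nat) : R := (INR a - INR b) / INR (S c).
Definition qcode (n : nat) (r : R) : Prop :=
  exists a b c, n = cpair a (cpair b c) /\ r = qval a b c.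

Definition unit_interval (x : R) : Prop := 0 <= x <= 1.

Definition I_space : space :=
  {| pt := R;
     rep := fun p x => unit_interval x /\
             forall n, exists q, qcode (p n) q /\ Rabs (q - x) <= / 2 ^ n |}.

(** A_-([0,1]): closed subsets of [0,1]; a name enumerates rational open intervals
    (value S (cpair i j) codes the interval (q_i, q_j); value 0 no information)
    whose union, intersected with [0,1], is the complement of A in [0,1]. *)
Definition AI_space : space :=
  {| pt := R -> Prop;
     rep := fun p A =>
       (forall x, A x -> unit_interval x) /\
       forall x, unit_interval x ->
         (~ A x <-> exists k i j qi qj,
                      p k = S (cpair i j) /\ qcode i qi /\ qcode j qj /\
                      qi < x < qj) |}.

Definition C2 : problem := {| src := A2_space; tgt := two_space; rel := fun A b => A b |}.

Definition AUC_I : problem :=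
  {| src := AI_space; tgt := I_space;
     rel := fun A x => A x /\
       ((forall y, A y <-> unit_interval y) \/
        (exists z, unit_interval z /\ forall y, A y <-> y = z)) |}.

Definition ConC_I : problem :=
  {| src := AI_space; tgt := I_space;
     rel := fun A x => A x /\
       exists a b, 0 <= a <= b /\ b <= 1 /\ forall y, A y <-> a <= y <= b |}.

From Stdlib Require Import Reals Arith List.
From Stdlib Require Import Lia Lra.
From Stdlib Require Import Classical ClassicalEpsilon FunctionalExtensionality.
Open Scope R_scope.

(** Suppose [H], [K] (given by associates [aH], [aK]) reduce [C2 x AUC] to [ConC].
    The argument is purely topological: only continuity of [H] and [K] is used.

    - Since any realizer of [ConC] may be used, [K] maps every instance to a name of
      an interval and [H] must succeed on every name of every point of it
      ([reduction_to_ConC]).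
    - While the [C2]-instance is still [{0,1}], the [K]-interval contains, for each
      bit [c], a point at which [H] is never forced to answer [c]: otherwise a
      compactness argument lets us remove [c] later, unnoticed ([unforced_point]).
    - Let [[a,b]] be the [K]-interval of the instance [({0,1}, [0,1])]. Inputs
      sharing a long prefix with it get [K]-intervals near [[a,b]]; a Lebesgue
      number for the open cover of [[a,b]] by the sets forcing the bit [0] or [1]
      bounds their length from below ([long_intervals]), while at a common point of
      two such intervals [H] outputs the same approximation of the [AUC]-answer,
      so singletons [{t}], [{t'}] with intersecting intervals are close
      ([shared_point_close]).
    - Hence [m + 3] singletons on a grid of mesh [1/(m+2)] give [m + 3] disjoint
      subintervals of [[0,1]] of length at least [1/(m+1)], which is impossible
      ([few_long_disjoint_intervals], [no_reduction]). *)

Definition triangle (s : nat) : nat := (s * (s + 1) / 2)%nat.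

Lemma triangle_S s : triangle (S s) = (triangle s + S s)%nat.
Proof.
  unfold triangle.
  replace (S s * (S s + 1))%nat with (s * (s + 1) + S s * 2)%nat by lia.
  now rewrite Nat.div_add by lia.
Qed.

Lemma triangle_le s s' : (s <= s')%nat -> (triangle s <= triangle s')%nat.
Proof. intros; apply Nat.Div0.div_le_mono, Nat.mul_le_mono; lia. Qed.

(** The Cantor pairing is injective: the diagonal [a + b] is recovered as the
    unique [s] with [triangle s <= cpair a b < triangle (S s)]. *)
Lemma cpair_inj a b a' b' : cpair a b = cpair a' b' -> a = a' /\ b = b'.
Proof.
  change (cpair a b) with (triangle (a + b) + b)%nat.
  change (cpair a' b') with (triangle (a' + b') + b')%nat.
  intro H.
  assert (Hdiag : (a + b = a' + b')%nat).
  { destruct (Nat.lt_trichotomy (a + b) (a' + b')) as [Hl|[He|Hl]]; auto.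
    - pose proof (triangle_le (S (a + b)) (a' + b') Hl). rewrite triangle_S in *. lia.
    - pose proof (triangle_le (S (a' + b')) (a + b) Hl). rewrite triangle_S in *. lia. }
  rewrite Hdiag in H. lia.
Qed.

Lemma qcode_fun n q q' : qcode n q -> qcode n q' -> q = q'.
Proof.
  intros [a [b [c [-> ->]]]] [a' [b' [c' [Hc ->]]]].
  apply cpair_inj in Hc as [-> Hc]. apply cpair_inj in Hc as [-> ->]. reflexivity.
Qed.

Definition commits (al : nat -> nat) (p : Baire) (m v k : nat) : Prop :=
  al (lcode (m :: prefix p k)) = S v /\
  forall j, (j < k)%nat -> al (lcode (m :: prefix p j)) = 0%nat.

Lemma prefix_ext (p p' : Baire) k :
  (forall i, (i < k)%nat -> p' i = p i) -> prefix p' k = prefix p k.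
Proof.
  intro H. apply map_ext_in. intros i Hi. apply in_seq in Hi. apply H. lia.
Qed.

Lemma commits_transfer al p p' m v k :
  commits al p m v k -> (forall i, (i < k)%nat -> p' i = p i) -> commits al p' m v k.
Proof.
  intros [Hk Hbefore] Hagree. split.
  - now rewrite (prefix_ext p p' k Hagree).
  - intros j Hj. rewrite (prefix_ext p p' j); [now apply Hbefore|].
    intros i Hi; apply Hagree; lia.
Qed.

Lemma commits_unique al p m v v' k k' :
  commits al p m v k -> commits al p m v' k' -> v = v'.
Proof.
  intros [H1 H2] [H1' H2'].
  destruct (Nat.lt_trichotomy k k') as [Hl|[<-|Hl]].
  - rewrite H2' in H1 by auto. discriminate.
  - rewrite H1 in H1'. now injection H1'.
  - rewrite H2 in H1' by auto. discriminate.
Qed.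

Lemma kapp_commits al p s m : kapp al p s -> exists k, commits al p m (s m) k.
Proof. intro H. exact (H m). Qed.

Lemma commits_kapp al p s m v k : commits al p m v k -> kapp al p s -> s m = v.
Proof.
  intros Hc Hs. destruct (kapp_commits al p s m Hs) as [k' Hk'].
  exact (commits_unique _ _ _ _ _ _ _ Hk' Hc).
Qed.

Lemma kapp_unique al p s s' : kapp al p s -> kapp al p s' -> s = s'.
Proof.
  intros H H'. apply functional_extensionality. intro m.
  destruct (kapp_commits al p s' m H') as [k Hk]. exact (commits_kapp _ _ _ _ _ _ Hk H).
Qed.

Lemma kapp_cont al p r L : kapp al p r -> exists M, forall p' r',
  (forall i, (i < M)%nat -> p' i = p i) -> kapp al p' r' ->
  forall i, (i < L)%nat -> r' i = r i.
Proof.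
  intro Hr. induction L as [|L [M HM]].
  - exists 0%nat. intros; lia.
  - destruct (kapp_commits al p r L Hr) as [k Hk].
    exists (Nat.max M k). intros p' r' Hagree Hr' i Hi.
    destruct (Nat.eq_dec i L) as [->|Hne].
    + apply (commits_kapp al p' r' L (r L) k); [|exact Hr'].
      apply (commits_transfer _ _ _ _ _ _ Hk). intros; apply Hagree; lia.
    + apply (HM p'); auto; [intros; apply Hagree|]; lia.
Qed.

Lemma bfst_bpair p q : bfst (bpair p q) = p.
Proof.
  apply functional_extensionality; intro n. unfold bfst, bpair.
  now rewrite Nat.even_even, Nat.div2_double.
Qed.

Lemma bsnd_bpair p q : bsnd (bpair p q) = q.
Proof.
  apply functional_extensionality; intro n. unfold bsnd, bpair.
  now rewrite Nat.even_odd, Nat.div2_odd'.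
Qed.

Lemma bpair_agree p p' q q' M :
  (forall i, (i < M)%nat -> p' i = p i) -> (forall i, (i < M)%nat -> q' i = q i) ->
  forall i, (i < M)%nat -> bpair p' q' i = bpair p q i.
Proof.
  intros Hp Hq i Hi. unfold bpair. pose proof (Nat.le_div2_diag_l i).
  destruct (Nat.even i); [apply Hp|apply Hq]; lia.
Qed.

(** * Compactness of closed intervals *)

(** Proof by the supremum of the points up to which a single index suffices. *)
Lemma uniform (u v : R) (P : nat -> R -> Prop) :
  u <= v ->
  (forall n m y, (n <= m)%nat -> P n y -> P m y) ->
  (forall x, u <= x <= v -> exists n d, 0 < d /\ forall y, Rabs (y - x) < d -> P n y) ->
  exists N eta, 0 < eta /\ forall y, u - eta < y < v + eta -> P N y.
Proof.
  intros Huv Hmono Hloc.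
  set (E := fun w => u <= w <= v /\ exists N, forall y, u <= y <= w -> P N y).
  assert (HEu : E u).
  { split; [lra|]. destruct (Hloc u) as [n [d [Hd Hn]]]; [lra|].
    exists n. intros y Hy. apply Hn. replace (y - u) with 0 by lra. rewrite Rabs_R0; lra. }
  assert (Hb : bound E) by (exists v; intros w [Hw _]; lra).
  destruct (completeness E Hb (ex_intro _ u HEu)) as [s [Hub Hlub]].
  assert (Hsu : u <= s) by (apply Hub; exact HEu).
  assert (Hsv : s <= v) by (apply Hlub; intros w [Hw _]; lra).
  destruct (Hloc s) as [ns [ds [Hds Hns]]]; [lra|].
  assert (Hw : exists w, E w /\ s - ds / 2 < w).
  { apply NNPP. intro Hn. assert (s <= s - ds / 2); [|lra].
    apply Hlub. intros w Hw. apply Rnot_lt_le. intro Hlt. apply Hn. exists w; auto. }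
  destruct Hw as [w [[Hw1 [Nw HNw]] Hw2]].
  set (w' := Rmin (s + ds / 2) v).
  assert (HEw' : E w').
  { split; [unfold w'; split; [apply Rmin_glb; lra|apply Rmin_r]|].
    exists (Nat.max Nw ns). intros y Hy.
    destruct (Rle_dec y w) as [Hyw|Hyw].
    - apply (Hmono Nw); [lia|]. apply HNw; lra.
    - apply (Hmono ns); [lia|]. apply Hns.
      assert (y <= s + ds / 2) by (pose proof (Rmin_l (s + ds / 2) v); unfold w' in Hy; lra).
      apply Rabs_def1; lra. }
  assert (Hw'v : w' = v).
  { assert (w' <= s) by (apply Hub; exact HEw').
    unfold w' in *. destruct (Rle_dec (s + ds / 2) v).
    - rewrite Rmin_left in * by lra. lra.
    - now rewrite Rmin_right by lra. }
  destruct HEw' as [_ [Nv HNv]]. rewrite Hw'v in HNv.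
  destruct (Hloc u) as [nu [du [Hdu Hnu]]]; [lra|].
  destruct (Hloc v) as [nv [dv [Hdv Hnv]]]; [lra|].
  exists (Nat.max Nv (Nat.max nu nv)), (Rmin du dv). split; [now apply Rmin_glb_lt|].
  intros y Hy. pose proof (Rmin_l du dv). pose proof (Rmin_r du dv).
  destruct (Rlt_dec y u) as [Hyu|Hyu]; [|destruct (Rlt_dec v y) as [Hyv|Hyv]].
  - apply (Hmono nu); [lia|]. apply Hnu. apply Rabs_def1; lra.
  - apply (Hmono nv); [lia|]. apply Hnv. apply Rabs_def1; lra.
  - apply (Hmono Nv); [lia|]. apply HNv; lra.
Qed.

Lemma uniform_unit (u v : R) (P : nat -> R -> Prop) :
  u <= v ->
  (forall n m y, (n <= m)%nat -> P n y -> P m y) ->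
  (forall x, u <= x <= v -> 0 <= x <= 1 ->
     exists n d, 0 < d /\ forall y, 0 <= y <= 1 -> Rabs (y - x) < d -> P n y) ->
  exists N eta, 0 < eta /\ forall y, u - eta < y < v + eta -> 0 <= y <= 1 -> P N y.
Proof.
  intros Huv Hmono Hloc.
  apply (uniform u v (fun n y => 0 <= y <= 1 -> P n y) Huv).
  - intros n m y Hnm Hn Hy. exact (Hmono n m y Hnm (Hn Hy)).
  - intros x Hx. destruct (Rle_dec 0 x) as [H0|H0]; [destruct (Rle_dec x 1) as [H1|H1]|].
    + destruct (Hloc x Hx (conj H0 H1)) as [n [d [Hd Hn]]]. exists n, d. split; auto.
    + exists 0%nat, (x - 1). split; [lra|]. intros y Hy Hy01. apply Rabs_def2 in Hy. lra.
    + exists 0%nat, (- x). split; [lra|]. intros y Hy Hy01. apply Rabs_def2 in Hy. lra.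
Qed.

Definition floor_nat (x : R) : nat := Z.to_nat (Zfloor x).

Lemma floor_nat_spec x : 0 <= x -> INR (floor_nat x) <= x < INR (floor_nat x) + 1.
Proof.
  intro Hx. unfold floor_nat. pose proof (Zfloor_bound x) as [H1 H2].
  assert (0 <= Zfloor x)%Z by (apply Zfloor_lub; simpl; lra).
  rewrite INR_IZR_INZ, Znat.Z2Nat.id by lia. lra.
Qed.

Lemma INR_S_pos n : 0 < INR (S n).
Proof. apply lt_0_INR; lia. Qed.

Lemma arch_inv (d : R) : 0 < d -> exists e : nat, / INR (S e) < d.
Proof.
  intro Hd. exists (floor_nat (/ d)).
  pose proof (floor_nat_spec (/ d) (Rlt_le _ _ (Rinv_0_lt_compat _ Hd))) as [_ H].
  rewrite S_INR. replace d with (/ / d) at 2 by (field; lra).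
  apply Rinv_lt_contravar; [|lra].
  apply Rmult_lt_0_compat; [now apply Rinv_0_lt_compat|pose proof (pos_INR (floor_nat (/ d))); lra].
Qed.

(** [strict_name nu x]: [nu] is a Cauchy name of [x] with strict error bounds; such
    names leave room to move [x] a little without changing a finite prefix. *)
Definition strict_name (nu : Baire) (x : R) : Prop :=
  0 <= x <= 1 /\ forall n, exists q, qcode (nu n) q /\ Rabs (q - x) < / 2 ^ n.

Lemma strict_name_rep nu x : strict_name nu x -> rep I_space nu x.
Proof.
  intros [Hx H]. split; [exact Hx|]. intro n. destruct (H n) as [q [Hq Hl]].
  exists q; split; [exact Hq|lra].
Qed.

Definition dyadic_name (x : R) : Baire :=
  fun n => cpair (floor_nat (x * 2 ^ n)) (cpair 0 (Nat.pow 2 n - 1)).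

Lemma dyadic_name_spec x : 0 <= x <= 1 -> strict_name (dyadic_name x) x.
Proof.
  intro Hx. split; [exact Hx|]. intro n.
  assert (HP : 0 < 2 ^ n) by (apply pow_lt; lra).
  set (f := floor_nat (x * 2 ^ n)).
  exists (INR f / 2 ^ n). split.
  - exists f, 0%nat, (Nat.pow 2 n - 1)%nat. split; [reflexivity|]. unfold qval.
    pose proof (Nat.pow_nonzero 2 n ltac:(lia)).
    replace (S (Nat.pow 2 n - 1)) with (Nat.pow 2 n) by lia.
    rewrite pow_INR. simpl INR. f_equal. ring.
  - pose proof (floor_nat_spec (x * 2 ^ n) ltac:(apply Rmult_le_pos; lra)) as [H1 H2].
    fold f in H1, H2.
    replace (INR f / 2 ^ n - x) with ((INR f - x * 2 ^ n) * / 2 ^ n) by (field; lra).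
    rewrite Rabs_mult, (Rabs_right (/ 2 ^ n)) by (left; apply Rinv_0_lt_compat; lra).
    rewrite <- (Rmult_1_l (/ 2 ^ n)) at 2. apply Rmult_lt_compat_r.
    + now apply Rinv_0_lt_compat.
    + apply Rabs_def1; lra.
Qed.

Lemma strict_name_perturb nu x k : strict_name nu x -> exists d, 0 < d /\
  forall y, 0 <= y <= 1 -> Rabs (y - x) < d ->
  exists nu', strict_name nu' y /\ forall i, (i < k)%nat -> nu' i = nu i.
Proof.
  intros [Hx Hn].
  assert (Hslack : exists d, 0 < d /\ forall i, (i < k)%nat ->
             exists q, qcode (nu i) q /\ Rabs (q - x) + d < / 2 ^ i).
  { induction k as [|k [d [Hd Hi]]].
    - exists 1. split; [lra|]. intros; lia.
    - destruct (Hn k) as [q [Hq Hl]].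
      exists (Rmin d ((/ 2 ^ k - Rabs (q - x)) / 2)). split; [apply Rmin_glb_lt; lra|].
      intros i Hik. pose proof (Rmin_l d ((/ 2 ^ k - Rabs (q - x)) / 2)).
      pose proof (Rmin_r d ((/ 2 ^ k - Rabs (q - x)) / 2)).
      destruct (Nat.eq_dec i k) as [->|Hne].
      + exists q; split; [exact Hq|lra].
      + destruct (Hi i) as [q' [Hq' Hl']]; [lia|]. exists q'; split; [exact Hq'|lra]. }
  destruct Hslack as [d [Hd Hslack]]. exists d. split; [exact Hd|].
  intros y Hy Hyx. exists (fun i => if Nat.ltb i k then nu i else dyadic_name y i). split.
  - split; [exact Hy|]. intro i. destruct (Nat.ltb_spec i k) as [Hi|Hi].
    + destruct (Hslack i Hi) as [q [Hq Hl]]. exists q; split; [exact Hq|].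
      replace (q - y) with ((q - x) + (x - y)) by ring.
      pose proof (Rabs_triang (q - x) (x - y)). rewrite Rabs_minus_sym in Hyx. lra.
    + apply (dyadic_name_spec y Hy).
  - intros i Hi. destruct (Nat.ltb_spec i k); [reflexivity|lia].
Qed.

Definition excluded_by (r : Baire) (k : nat) (y : R) : Prop :=
  exists i j qi qj, r k = S (cpair i j) /\ qcode i qi /\ qcode j qj /\ qi < y < qj.

Definition member (r : Baire) (y : R) : Prop :=
  0 <= y <= 1 /\ ~ exists k, excluded_by r k y.

Lemma rep_member r A : rep AI_space r A -> forall y, A y <-> member r y.
Proof.
  intros [Hsub Hcompl] y. split.
  - intro Hy. split; [exact (Hsub y Hy)|].
    intros [k [i [j [qi [qj Hk]]]]]. apply (proj2 (Hcompl y (Hsub y Hy))); [|exact Hy].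
    exists k, i, j, qi, qj. exact Hk.
  - intros [Hy Hnot]. apply NNPP. intro Hn.
    destruct (proj1 (Hcompl y Hy) Hn) as [k [i [j [qi [qj Hk]]]]].
    apply Hnot. exists k, i, j, qi, qj. exact Hk.
Qed.

Definition names_interval (r : Baire) : Prop :=
  exists a b, 0 <= a <= b /\ b <= 1 /\ forall y, member r y <-> a <= y <= b.

(** If [r] names [[a,b]], every name agreeing with [r] on a long enough prefix
    names a subset of the [eps]-neighbourhood of [[a,b]]: by compactness, finitely
    many listed intervals already cover [[0,1]] minus that neighbourhood. *)
Lemma interval_prefix_window r a b eps : 0 < eps ->
  (forall y, member r y <-> a <= y <= b) ->
  exists L, forall r', (forall i, (i < L)%nat -> r' i = r i) ->
    forall y, member r' y -> a - eps < y < b + eps.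
Proof.
  intros Heps Hr.
  set (P := fun n y => a - eps < y < b + eps \/ exists k, (k < n)%nat /\ excluded_by r k y).
  destruct (uniform_unit 0 1 P) as [L [eta [Heta HL]]]; [lra| | |].
  - intros n m y Hnm [Hin|[k [Hk Hex]]]; [now left|right].
    exists k. split; [lia|exact Hex].
  - intros x _ Hx. destruct (classic (a - eps < x < b + eps)) as [Hin|Hout].
    + exists 0%nat, (Rmin (x - (a - eps)) (b + eps - x)). split; [apply Rmin_glb_lt; lra|].
      intros y _ Hy. left. pose proof (Rmin_l (x - (a - eps)) (b + eps - x)).
      pose proof (Rmin_r (x - (a - eps)) (b + eps - x)). apply Rabs_def2 in Hy. lra.
    + assert (Hex : exists k, excluded_by r k x).
      { apply NNPP. intro Hn. assert (Hm : member r x) by (split; assumption).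
        apply Hr in Hm. lra. }
      destruct Hex as [k [i [j [qi [qj [Hk [Hi [Hj Hlt]]]]]]]].
      exists (S k), (Rmin (x - qi) (qj - x)). split; [apply Rmin_glb_lt; lra|].
      intros y _ Hy. right. exists k. split; [lia|].
      pose proof (Rmin_l (x - qi) (qj - x)). pose proof (Rmin_r (x - qi) (qj - x)).
      apply Rabs_def2 in Hy. exists i, j, qi, qj. repeat split; auto; lra.
  - exists L. intros r' Hagree y [Hy Hnot].
    destruct (HL y ltac:(lra) Hy) as [Hin|[k [Hk [i [j [qi [qj [Hrk Hrest]]]]]]]]; [exact Hin|].
    exfalso. apply Hnot. exists k, i, j, qi, qj. rewrite Hagree by exact Hk. auto.
Qed.

(** * Forcing an output digit *)

Definition forces (al : nat -> nat) (p : Baire) (m v N : nat) (y : R) : Prop :=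
  exists nu k, strict_name nu y /\ (k <= N)%nat /\ commits al (bpair p nu) m v k.

Lemma forces_mono al p m v N N' y : (N <= N')%nat -> forces al p m v N y -> forces al p m v N' y.
Proof. intros HN [nu [k [Hnu [Hk Hc]]]]. exists nu, k. split; [exact Hnu|split; [lia|exact Hc]]. Qed.

Lemma forces_transfer al p p' m v N y : (forall i, (i < N)%nat -> p' i = p i) ->
  forces al p m v N y -> forces al p' m v N y.
Proof.
  intros Hagree [nu [k [Hnu [Hk Hc]]]]. exists nu, k. split; [exact Hnu|split; [exact Hk|]].
  apply (commits_transfer _ _ _ _ _ _ Hc). apply bpair_agree; [|auto].
  intros; apply Hagree; lia.
Qed.

Lemma forces_open al p m v N x : forces al p m v N x -> exists rho, 0 < rho /\
  forall y, 0 <= y <= 1 -> Rabs (y - x) < rho -> forces al p m v N y.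
Proof.
  intros [nu [k [Hnu [Hk Hc]]]].
  destruct (strict_name_perturb nu x k Hnu) as [d [Hd Hperturb]]. exists d. split; [exact Hd|].
  intros y Hy Hyx. destruct (Hperturb y Hy Hyx) as [nu' [Hnu' Hagree]].
  exists nu', k. split; [exact Hnu'|split; [exact Hk|]].
  apply (commits_transfer _ _ _ _ _ _ Hc). now apply bpair_agree.
Qed.

Lemma kapp_forces al p m nu x s : strict_name nu x -> kapp al (bpair p nu) s ->
  exists N, forces al p m (s m) N x.
Proof.
  intros Hnu Hs. destruct (kapp_commits _ _ _ m Hs) as [k Hk].
  exists k, nu, k. auto.
Qed.

Lemma forces_output al p m v N y (Q : Baire -> Prop) : forces al p m v N y ->
  (forall nu, strict_name nu y -> exists s, kapp al (bpair p nu) s /\ Q s) ->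
  exists s, Q s /\ s m = v.
Proof.
  intros [nu [k [Hnu [_ Hc]]]] Hout. destruct (Hout nu Hnu) as [s [Hs HQ]].
  exists s. split; [exact HQ|exact (commits_kapp _ _ _ _ _ _ Hc Hs)].
Qed.

Lemma forces_uniform al p m (V : nat -> Prop) a b : a <= b ->
  (forall x, a <= x <= b -> exists v N, V v /\ forces al p m v N x) ->
  exists N eta, 0 < eta /\ forall y, a - eta < y < b + eta -> 0 <= y <= 1 ->
    exists v, V v /\ forces al p m v N y.
Proof.
  intros Hab Hcover.
  apply (uniform_unit a b (fun n y => exists v, V v /\ forces al p m v n y) Hab).
  - intros n n' y Hn [v [Hv Hf]]. exists v. split; [exact Hv|exact (forces_mono _ _ _ _ _ _ _ Hn Hf)].
  - intros x Hx _. destruct (Hcover x Hx) as [v [N [Hv Hf]]].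
    destruct (forces_open _ _ _ _ _ _ Hf) as [rho [Hrho Hopen]].
    exists N, rho. split; [exact Hrho|]. intros y Hy Hyx. exists v. auto.
Qed.

Lemma lebesgue_number {I : Type} (u v : R) (O : I -> R -> Prop) : u <= v ->
  (forall c x, O c x -> exists rho, 0 < rho /\
     forall y, 0 <= y <= 1 -> Rabs (y - x) < rho -> O c y) ->
  (forall x, u <= x <= v -> 0 <= x <= 1 -> exists c, O c x) ->
  exists n, forall x, u <= x <= v -> 0 <= x <= 1 ->
    exists c, forall y, 0 <= y <= 1 -> Rabs (y - x) < / INR (S n) -> O c y.
Proof.
  intros Huv Hopen Hcover.
  set (P := fun n x => exists c, forall y, 0 <= y <= 1 -> Rabs (y - x) < / INR (S n) -> O c y).
  destruct (uniform_unit u v P Huv) as [n [eta [Heta Hn]]].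
  - intros n m x Hnm [c Hc]. exists c. intros y Hy Hyx. apply Hc; [exact Hy|].
    assert (/ INR (S m) <= / INR (S n)); [|lra].
    apply Rinv_le_contravar; [apply INR_S_pos|apply le_INR; lia].
  - intros x Hx Hx01. destruct (Hcover x Hx Hx01) as [c Hc].
    destruct (Hopen c x Hc) as [rho [Hrho Hball]].
    destruct (arch_inv (rho / 2)) as [n Hn]; [lra|].
    exists n, (rho / 2). split; [lra|]. intros y _ Hyx. exists c. intros z Hz Hzy.
    apply Hball; [exact Hz|].
    replace (z - x) with ((z - y) + (y - x)) by ring.
    pose proof (Rabs_triang (z - y) (y - x)). lra.
  - exists n. intros x Hx Hx01. apply Hn; [lra|exact Hx01].
Qed.

Lemma pigeonhole (n : nat) (Rel : nat -> nat -> Prop) :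
  (forall i, (i <= S n)%nat -> exists k, (k <= n)%nat /\ Rel i k) ->
  (forall i i' k, (i <= S n)%nat -> (i' <= S n)%nat -> Rel i k -> Rel i' k -> i = i') ->
  False.
Proof.
  intros Hex Hinj.
  set (f := fun i => epsilon (inhabits 0%nat) (fun k => (k <= n)%nat /\ Rel i k)).
  assert (Hf : forall i, (i <= S n)%nat -> (f i <= n)%nat /\ Rel i (f i))
    by (intros i Hi; exact (epsilon_spec _ _ (Hex i Hi))).
  assert (Hnodup : NoDup (map f (seq 0 (S (S n))))).
  { apply NoDup_map_NoDup_ForallPairs; [|apply seq_NoDup].
    intros i i' Hi Hi' Heq. apply in_seq in Hi, Hi'.
    apply (Hinj i i' (f i)); [lia|lia|apply Hf; lia|rewrite Heq; apply Hf; lia]. }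
  assert (Hincl : incl (map f (seq 0 (S (S n)))) (seq 0 (S n))).
  { intros k Hk. apply in_map_iff in Hk as [i [<- Hi]]. apply in_seq in Hi.
    apply in_seq. pose proof (proj1 (Hf i ltac:(lia))). lia. }
  pose proof (NoDup_incl_length Hnodup Hincl). rewrite length_map, !length_seq in *. lia.
Qed.

Lemma grid_point lo hi m : 0 <= lo -> hi <= 1 -> hi - lo >= / INR (S m) ->
  exists k, (k <= S m)%nat /\ lo <= INR k / INR (S m) <= hi.
Proof.
  intros Hlo Hhi Hd. pose proof (INR_S_pos m) as Hm.
  assert (Hscaled : 0 <= lo * INR (S m)) by (apply Rmult_le_pos; lra).
  pose proof (floor_nat_spec _ Hscaled) as [H1 H2].
  set (k := S (floor_nat (lo * INR (S m)))). assert (Hk : INR k = INR (floor_nat (lo * INR (S m))) + 1)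
    by apply S_INR.
  assert (Hkhi : INR k <= hi * INR (S m)).
  { assert ((hi - lo) * INR (S m) >= 1); [|lra].
    replace 1 with (/ INR (S m) * INR (S m)) by (field; lra).
    apply Rle_ge, Rmult_le_compat_r; lra. }
  exists k. split.
  - apply INR_le. pose proof (Rmult_le_compat_r (INR (S m)) hi 1 ltac:(lra) Hhi). lra.
  - split; [apply (Rmult_le_reg_r (INR (S m)))|apply (Rmult_le_reg_r (INR (S m)))]; auto;
      unfold Rdiv; rewrite Rmult_assoc, Rinv_l by lra; lra.
Qed.

(** At most [m + 2] pairwise disjoint subintervals of [[0,1]] of length at least
    [1/(m+1)] exist: each contains its own grid point. *)
Lemma few_long_disjoint_intervals (m : nat) (J : nat -> R -> Prop) :
  (forall i, (i <= S (S m))%nat -> exists lo hi, 0 <= lo /\ hi <= 1 /\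
     hi - lo >= / INR (S m) /\ forall y, lo <= y <= hi -> J i y) ->
  (forall i i' y, (i <= S (S m))%nat -> (i' <= S (S m))%nat -> J i y -> J i' y -> i = i') ->
  False.
Proof.
  intros Hlong Hdisj.
  apply (pigeonhole (S m) (fun i k => J i (INR k / INR (S m)))).
  - intros i Hi. destruct (Hlong i Hi) as [lo [hi [Hlo [Hhi [Hd HJ]]]]].
    destruct (grid_point lo hi m Hlo Hhi Hd) as [k [Hk Hg]]. exists k. split; auto.
  - intros i i' k. apply Hdisj.
Qed.

Definition grid (i M : nat) : R := INR i / INR (S M).

Lemma grid_range i M : (i <= S M)%nat -> 0 <= grid i M <= 1.
Proof.
  intro H. unfold grid. pose proof (INR_S_pos M). apply le_INR in H. pose proof (pos_INR i).
  split.
  - apply Rmult_le_pos; [lra|]. left; now apply Rinv_0_lt_compat.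
  - apply (Rmult_le_reg_r (INR (S M))); auto. unfold Rdiv.
    rewrite Rmult_assoc, Rinv_l by lra. lra.
Qed.

Lemma grid_sep i i' M : i <> i' -> Rabs (grid i M - grid i' M) >= / INR (S M).
Proof.
  intro Hne. unfold grid. pose proof (INR_S_pos M).
  replace (INR i / INR (S M) - INR i' / INR (S M)) with ((INR i - INR i') * / INR (S M))
    by (field; lra).
  rewrite Rabs_mult, (Rabs_right (/ INR (S M))) by (left; now apply Rinv_0_lt_compat).
  assert (Rabs (INR i - INR i') >= 1).
  { destruct (Nat.lt_gt_cases i i') as [[Hl|Hl] _]; [exact Hne| |].
    - apply le_INR in Hl. rewrite S_INR in Hl. rewrite Rabs_left; lra.
    - apply le_INR in Hl. rewrite S_INR in Hl. rewrite Rabs_right; lra. }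
  pose proof (Rinv_0_lt_compat _ H).
  rewrite <- (Rmult_1_l (/ INR (S M))) at 2. apply Rle_ge, Rmult_le_compat_r; lra.
Qed.

Lemma pow2_ge n : INR (S n) <= 2 ^ n.
Proof.
  induction n as [|n IH]; [simpl; lra|].
  rewrite !S_INR in *. simpl. pose proof (pos_INR n). lra.
Qed.

Definition zeros : Baire := fun _ => 0%nat.

Lemma zeros_name_full_2 : rep A2_space zeros (fun _ => True).
Proof.
  split; [intros; unfold zeros; lia|]. intro b. split.
  - intro H. now exfalso.
  - intros [k Hk]. discriminate.
Qed.

Lemma zeros_name_full_I : rep AI_space zeros unit_interval.
Proof.
  split; [auto|]. intros x Hx. split.
  - intro H. now exfalso.
  - intros [k [i [j [qi [qj [Hk _]]]]]]. discriminate.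
Qed.

Definition late_removal (c : bool) (M : nat) : Baire :=
  fun k => if Nat.ltb k M then 0%nat else S (b2n c).

Lemma b2n_inj b c : b2n b = b2n c -> b = c.
Proof. destruct b, c; simpl; congruence. Qed.

Lemma late_removal_name c M : rep A2_space (late_removal c M) (fun b => b <> c).
Proof.
  split.
  - intro k. unfold late_removal. destruct (Nat.ltb k M); [lia|]. destruct c; simpl; lia.
  - intro b. split.
    + intro H. apply NNPP in H. subst. exists M. unfold late_removal. now rewrite Nat.ltb_irrefl.
    + intros [k Hk] Hne. unfold late_removal in Hk. destruct (Nat.ltb k M); [discriminate|].
      injection Hk as Hk. apply b2n_inj in Hk. congruence.
Qed.

Lemma late_removal_prefix c M i : (i < M)%nat -> late_removal c M i = zeros i.
Proof. intro Hi. unfold late_removal. now destruct (Nat.ltb_spec i M); [|lia]. Qed.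

Definition code_minus_one : nat := cpair 0 (cpair 1 0).
Definition code_two : nat := cpair 2 (cpair 0 0).
Definition code_left (i M e : nat) : nat := cpair (i * S e) (cpair (S M) (S M * S e - 1)).
Definition code_right (i M e : nat) : nat := cpair (i * S e + S M) (cpair 0 (S M * S e - 1)).

Lemma code_minus_one_spec : qcode code_minus_one (-1).
Proof. exists 0%nat, 1%nat, 0%nat. split; [reflexivity|]. unfold qval. simpl. field. Qed.

Lemma code_two_spec : qcode code_two 2.
Proof. exists 2%nat, 0%nat, 0%nat. split; [reflexivity|]. unfold qval. simpl. field. Qed.

Lemma code_left_spec i M e : qcode (code_left i M e) (grid i M - / INR (S e)).
Proof.
  exists (i * S e)%nat, (S M), (S M * S e - 1)%nat. split; [reflexivity|].
  unfold qval, grid. replace (S (S M * S e - 1)) with (S M * S e)%nat by lia.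
  rewrite !mult_INR. pose proof (INR_S_pos M). pose proof (INR_S_pos e). field. lra.
Qed.

Lemma code_right_spec i M e : qcode (code_right i M e) (grid i M + / INR (S e)).
Proof.
  exists (i * S e + S M)%nat, 0%nat, (S M * S e - 1)%nat. split; [reflexivity|].
  unfold qval, grid. replace (S (S M * S e - 1)) with (S M * S e)%nat by lia.
  rewrite plus_INR, !mult_INR. pose proof (INR_S_pos M). pose proof (INR_S_pos e).
  simpl (INR 0). field. lra.
Qed.

Definition late_singleton (i M N : nat) : Baire := fun k =>
  if Nat.ltb k N then 0%nat else
  if Nat.even (k - N) then S (cpair code_minus_one (code_left i M (Nat.div2 (k - N))))
  else S (cpair (code_right i M (Nat.div2 (k - N))) code_two).

Lemma late_singleton_prefix i M N k : (k < N)%nat -> late_singleton i M N k = 0%nat.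
Proof. intro Hk. unfold late_singleton. now destruct (Nat.ltb_spec k N); [|lia]. Qed.

Lemma late_singleton_name i M N : (i <= S M)%nat ->
  rep AI_space (late_singleton i M N) (fun y => y = grid i M).
Proof.
  intro Hi. pose proof (grid_range i M Hi) as Ht. split; [now intros x ->|].
  intros x Hx. unfold unit_interval in Hx. split.
  - intro Hne. destruct (arch_inv (Rabs (x - grid i M))) as [e He].
    { apply Rabs_pos_lt. intro; apply Hne; lra. }
    destruct (Rlt_dec x (grid i M)) as [Hlt|Hge].
    + rewrite Rabs_left in He by lra.
      exists (N + 2 * e)%nat, code_minus_one, (code_left i M e), (-1), (grid i M - / INR (S e)).
      split; [|split; [apply code_minus_one_spec|split; [apply code_left_spec|lra]]].
      unfold late_singleton. destruct (Nat.ltb_spec (N + 2 * e) N); [lia|].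
      replace (N + 2 * e - N)%nat with (2 * e)%nat by lia.
      now rewrite Nat.even_even, Nat.div2_double.
    + assert (x > grid i M) by (destruct (Rtotal_order x (grid i M)) as [?|[?|?]]; auto; lra).
      rewrite Rabs_right in He by lra.
      exists (N + (2 * e + 1))%nat, (code_right i M e), code_two, (grid i M + / INR (S e)), 2.
      split; [|split; [apply code_right_spec|split; [apply code_two_spec|lra]]].
      unfold late_singleton. destruct (Nat.ltb_spec (N + (2 * e + 1)) N); [lia|].
      replace (N + (2 * e + 1) - N)%nat with (2 * e + 1)%nat by lia.
      now rewrite Nat.even_odd, Nat.div2_odd'.
  - intros [k [i0 [j0 [qi [qj [Hk [Hqi [Hqj Hlt]]]]]]]] ->.
    unfold late_singleton in Hk. destruct (Nat.ltb k N); [discriminate|].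
    pose proof (Rinv_0_lt_compat _ (INR_S_pos (Nat.div2 (k - N)))).
    destruct (Nat.even (k - N)); injection Hk as Hk; apply cpair_inj in Hk as [<- <-].
    + pose proof (qcode_fun _ _ _ Hqj (code_left_spec i M (Nat.div2 (k - N)))). lra.
    + pose proof (qcode_fun _ _ _ Hqi (code_right_spec i M (Nat.div2 (k - N)))). lra.
Qed.

(** * Reductions to connected choice *)

Definition ConC_answers (r nu : Baire) : Prop :=
  forall A, rep AI_space r A -> (exists y, rel ConC_I A y) ->
    exists z, rep I_space nu z /\ rel ConC_I A z.

Definition choice_realizer (r : Baire) : Baire := epsilon (inhabits zeros) (ConC_answers r).

Definition ConC_domain (r : Baire) : Prop :=
  exists A, rep AI_space r A /\ exists y, rel ConC_I A y.

Lemma choice_realizer_spec : realizes ConC_I ConC_domain choice_realizer.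
Proof.
  intros r A HA [y Hy]. split; [exists A; split; [exact HA|now exists y]|].
  apply (epsilon_spec (inhabits zeros) (ConC_answers r)); [|exact HA|now exists y].
  assert (Hy01 : 0 <= y <= 1) by (apply (proj1 HA); apply Hy).
  exists (dyadic_name y). intros A' HA' [y' [_ Hint]]. exists y.
  split; [exact (strict_name_rep _ _ (dyadic_name_spec y Hy01))|].
  split; [|exact Hint]. apply (rep_member r A' HA'), (rep_member r A HA), Hy.
Qed.

Definition patched_realizer (r0 nu r : Baire) : Baire :=
  if excluded_middle_informative (r = r0) then nu else choice_realizer r.

Lemma patched_realizer_spec r0 nu z : rep I_space nu z -> member r0 z ->
  realizes ConC_I ConC_domain (patched_realizer r0 nu).
Proof.
  intros Hnu Hz r A HA Hdom. destruct (choice_realizer_spec r A HA Hdom) as [HD HG].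
  split; [exact HD|]. unfold patched_realizer.
  destruct (excluded_middle_informative (r = r0)) as [->|_]; [|exact HG].
  exists z. split; [exact Hnu|]. split; [now apply (rep_member r0 A HA)|].
  destruct Hdom as [y [_ Hint]]. exact Hint.
Qed.

Lemma ConC_domain_interval r : ConC_domain r -> names_interval r.
Proof.
  intros [A [HA [y [_ [a [b [Hab [Hb Hint]]]]]]]]. exists a, b.
  split; [exact Hab|split; [exact Hb|]]. intro w. rewrite <- (rep_member r A HA). apply Hint.
Qed.

Definition reduces_via (f g : problem) (aH aK : nat -> nat) : Prop :=
  forall (GD : Baire -> Prop) (G : Baire -> Baire), realizes g GD G ->
    forall p x, rep (src f) p x -> (exists y, rel f x y) ->
      exists r, kapp aK p r /\ GD r /\
        exists s, kapp aH (bpair p (G r)) s /\ exists y, rep (tgt f) s y /\ rel f x y.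

(** Key property of reductions to [ConC_I]: the forward map [K] turns every instance
    into a name of an interval, and the backward map [H] must succeed on every name
    of every point of that interval (each of them is a legitimate answer). *)
Lemma reduction_to_ConC f aH aK : reduces_via f ConC_I aH aK ->
  forall p x, rep (src f) p x -> (exists y, rel f x y) ->
  exists r, kapp aK p r /\ names_interval r /\
    forall nu z, rep I_space nu z -> member r z ->
      exists s, kapp aH (bpair p nu) s /\ exists y, rep (tgt f) s y /\ rel f x y.
Proof.
  intros HW p x Hp Hdom.
  destruct (HW _ _ choice_realizer_spec p x Hp Hdom) as [r [Hr [HD _]]].
  exists r. split; [exact Hr|split; [now apply ConC_domain_interval|]].
  intros nu z Hnu Hz.
  destruct (HW _ _ (patched_realizer_spec r nu z Hnu Hz) p x Hp Hdom)
    as [r' [Hr' [_ [s [Hs Hsol]]]]].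
  rewrite <- (kapp_unique _ _ _ _ Hr Hr') in Hs. unfold patched_realizer in Hs.
  destruct (excluded_middle_informative (r = r)) as [_|C]; [|now exfalso].
  exists s. split; [exact Hs|exact Hsol].
Qed.

Definition solves (A : bool -> Prop) (B : R -> Prop) (s : Baire) : Prop :=
  exists c y, s 0%nat = b2n c /\ A c /\ B y /\
    forall n, exists q, qcode (s (2 * n + 1)%nat) q /\ Rabs (q - y) <= / 2 ^ n.

Lemma AUC_full_domain : exists y, rel AUC_I unit_interval y.
Proof. exists 0. split; [unfold unit_interval; lra|]. left. tauto. Qed.

Lemma AUC_singleton_domain t : 0 <= t <= 1 -> exists y, rel AUC_I (fun y => y = t) y.
Proof. intro Ht. exists t. split; [reflexivity|]. right. exists t. split; [exact Ht|tauto]. Qed.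

Definition full_input : Baire := bpair zeros zeros.

Lemma full_input_prefix be M : (forall i, (i < M)%nat -> be i = 0%nat) ->
  forall i, (i < M)%nat -> bpair zeros be i = full_input i.
Proof. intro Hbe. apply bpair_agree; [reflexivity|exact Hbe]. Qed.

Section ReductionOfProduct.
Variables aH aK : nat -> nat.
Hypothesis HW : reduces_via (prod_problem C2 AUC_I) ConC_I aH aK.

Lemma product_instance al be A B :
  rep A2_space al A -> rep AI_space be B -> (exists c, A c) -> (exists y, rel AUC_I B y) ->
  exists r, kapp aK (bpair al be) r /\ names_interval r /\
    forall nu z, strict_name nu z -> member r z ->
      exists s, kapp aH (bpair (bpair al be) nu) s /\ solves A B s.
Proof.
  intros Hal Hbe [c HA] [y HB].
  destruct (reduction_to_ConC _ _ _ HW (bpair al be) (A, B)) as [r [Hr [Hint Hout]]].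
  - simpl. rewrite bfst_bpair, bsnd_bpair. now split.
  - now exists (c, y).
  - exists r. split; [exact Hr|split; [exact Hint|]]. intros nu z Hnu Hz.
    destruct (Hout nu z (strict_name_rep _ _ Hnu) Hz) as [s [Hs [[c' y'] [[Hc' [_ Hy']] [HA' HB']]]]].
    exists s. split; [exact Hs|]. exists c', y'. simpl in *.
    split; [exact Hc'|split; [exact HA'|split; [apply HB'|exact Hy']]].
Qed.

(** If the [C2]-component is still the full set, then for each bit [c] the interval
    produced by [K] contains a point none of whose names forces [H] to answer [c].
    Otherwise, by compactness, answering [c] would be decided after finitely many
    symbols, and removing [c] from the [C2]-instance later on would go unnoticed. *)
Lemma unforced_point be B : rep AI_space be B -> (exists y, rel AUC_I B y) ->
  forall r, kapp aK (bpair zeros be) r -> forall c,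
  exists u, member r u /\ forall N, ~ forces aH (bpair zeros be) 0 (b2n c) N u.
Proof.
  intros Hbe HB r Hr c. apply NNPP. intro Hnone.
  assert (Hforced : forall u, member r u -> exists v N, v = b2n c /\
                      forces aH (bpair zeros be) 0 v N u).
  { intros u Hu. apply NNPP. intro Hn. apply Hnone. exists u. split; [exact Hu|].
    intros N HN. apply Hn. exists (b2n c), N. now split. }
  destruct (product_instance zeros be _ B zeros_name_full_2 Hbe (ex_intro _ true I) HB)
    as [r1 [Hr1 [[a [b [Hab [Hb Hint]]]] _]]].
  rewrite <- (kapp_unique _ _ _ _ Hr Hr1) in Hint.
  destruct (forces_uniform aH (bpair zeros be) 0 (fun v => v = b2n c) a b) as [N [eta [Heta HN]]];
    [lra|intros x Hx; apply Hforced, Hint, Hx|].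
  destruct (interval_prefix_window r a b eta Heta Hint) as [L HL].
  destruct (kapp_cont _ _ _ L Hr) as [MK HMK].
  set (M := Nat.max N MK).
  assert (Hagree : forall i, (i < M)%nat -> bpair (late_removal c M) be i = bpair zeros be i)
    by (apply bpair_agree; [apply late_removal_prefix|reflexivity]).
  assert (Hnc : negb c <> c) by (destruct c; discriminate).
  destruct (product_instance (late_removal c M) be _ B (late_removal_name c M) Hbe
              (ex_intro _ (negb c) Hnc) HB) as [r' [Hr' [[a' [b' [Hab' [Hb' Hint']]]] Hout]]].
  assert (Ha' : member r' a') by (apply Hint'; lra).
  assert (Hwin : a - eta < a' < b + eta).
  { apply (HL r'); [|exact Ha']. apply (HMK (bpair (late_removal c M) be) r'); [|exact Hr'].
    intros i Hi. apply Hagree. lia. }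
  destruct (HN a' Hwin (proj1 Ha')) as [v [-> Hf]].
  apply (forces_transfer _ _ (bpair (late_removal c M) be)) in Hf;
    [|intros i Hi; apply Hagree; lia].
  destruct (forces_output _ _ _ _ _ _ _ Hf (fun nu Hnu => Hout nu a' Hnu Ha'))
    as [s [[c' [y [Hs0 [Hc' _]]]] Hsc]].
  rewrite Hsc in Hs0. apply b2n_inj in Hs0. congruence.
Qed.

(** From now on, [r0] is the answer of [K] on the instance [({0,1}, [0,1])]. *)
Section FullInstance.
Variables (r0 : Baire) (a b : R).
Hypothesis Hr0 : kapp aK full_input r0.
Hypothesis Hab : a <= b.
Hypothesis Hint0 : forall y, member r0 y <-> a <= y <= b.
Hypothesis Hout0 : forall nu z, strict_name nu z -> member r0 z ->
  exists s, kapp aH (bpair full_input nu) s /\ solves (fun _ => True) unit_interval s.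

Lemma output_window eps : 0 < eps -> exists M, forall be r y,
  (forall i, (i < M)%nat -> be i = 0%nat) -> kapp aK (bpair zeros be) r -> member r y ->
  a - eps < y < b + eps.
Proof.
  intro Heps. destruct (interval_prefix_window r0 a b eps Heps Hint0) as [L HL].
  destruct (kapp_cont _ _ _ L Hr0) as [M HM]. exists M. intros be r y Hbe Hr Hy.
  apply (HL r); [|exact Hy]. apply (HM (bpair zeros be) r); [|exact Hr]. now apply full_input_prefix.
Qed.

Lemma output_cover m (V : nat -> Prop) :
  (forall s, solves (fun _ => True) unit_interval s -> V (s m)) ->
  exists N eta, 0 < eta /\ forall y, a - eta < y < b + eta -> 0 <= y <= 1 ->
    exists v, V v /\ forces aH full_input m v N y.
Proof.
  intro HV. apply (forces_uniform _ _ _ V a b Hab). intros x Hx.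
  assert (Hx01 : 0 <= x <= 1) by (apply (Hint0 x) in Hx; apply Hx).
  pose proof (dyadic_name_spec x Hx01) as Hnu.
  destruct (Hout0 _ x Hnu (proj2 (Hint0 x) Hx)) as [s [Hs Hsol]].
  destruct (kapp_forces _ _ m _ _ _ Hnu Hs) as [N HN]. exists (s m), N. auto.
Qed.

(** For [AUC]-inputs sharing a long prefix with [full_input], the
    interval produced by [K] has length bounded below: it contains unforced points
    for both bits, which a Lebesgue number for the bit-forcing cover keeps apart. *)
Lemma long_intervals : exists m N1, forall be B r,
  rep AI_space be B -> (exists y, rel AUC_I B y) -> (forall i, (i < N1)%nat -> be i = 0%nat) ->
  kapp aK (bpair zeros be) r ->
  exists lo hi, 0 <= lo /\ hi <= 1 /\ hi - lo >= / INR (S m) /\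
    forall y, lo <= y <= hi -> member r y.
Proof.
  destruct (output_cover 0 (fun v => exists c, v = b2n c)) as [Nb [etab [Hetab Hbits]]].
  { intros s [c [y [Hs0 _]]]. now exists c. }
  set (O := fun c y => forces aH full_input 0 (b2n c) Nb y).
  destruct (lebesgue_number (a - etab / 2) (b + etab / 2) O) as [m Hleb]; [lra| | |].
  - intros c x Hx. exact (forces_open _ _ _ _ _ _ Hx).
  - intros x Hx Hx01. destruct (Hbits x ltac:(lra) Hx01) as [v [[c ->] Hf]]. now exists c.
  - destruct (output_window (etab / 2)) as [M HM]; [lra|].
    exists m, (Nat.max M Nb). intros be B r Hbe HB Hzero Hr.
    destruct (product_instance zeros be _ B zeros_name_full_2 Hbe (ex_intro _ true I) HB)
      as [r1 [Hr1 [[ai [bi [_ [_ Hinti]]]] _]]].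
    rewrite <- (kapp_unique _ _ _ _ Hr Hr1) in Hinti.
    assert (Hunforced : forall c, exists u, member r u /\ ~ O c u /\
                          a - etab / 2 < u < b + etab / 2).
    { intro c. destruct (unforced_point be B Hbe HB r Hr c) as [u [Hu Hnot]].
      exists u. split; [exact Hu|split].
      - intro Hf. apply (Hnot Nb). apply (forces_transfer _ full_input); [|exact Hf].
        apply full_input_prefix. intros i Hi. apply Hzero. lia.
      - apply (HM be r u); [intros i Hi; apply Hzero; lia|exact Hr|exact Hu]. }
    destruct (Hunforced false) as [u0 [Hu0 [Hnot0 Hw0]]].
    destruct (Hunforced true) as [u1 [Hu1 [Hnot1 Hw1]]].
    assert (Hgap : Rabs (u1 - u0) >= / INR (S m)).
    { apply Rnot_lt_ge. intro Hclose.
      destruct (Hleb u0 ltac:(lra) (proj1 Hu0)) as [[|] Hball].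
      - exact (Hnot1 (Hball u1 (proj1 Hu1) Hclose)).
      - apply Hnot0, Hball; [exact (proj1 Hu0)|].
        rewrite Rminus_diag, Rabs_R0. apply Rinv_0_lt_compat, INR_S_pos. }
    pose proof (proj1 (Hinti u0) Hu0). pose proof (proj1 (Hinti u1) Hu1).
    destruct Hu0 as [Hu0 _], Hu1 as [Hu1 _].
    destruct (Rle_dec u0 u1) as [Hle|Hgt].
    + rewrite Rabs_right in Hgap by lra. exists u0, u1.
      split; [lra|split; [lra|split; [lra|]]]. intros y Hy. apply Hinti. lra.
    + rewrite Rabs_left in Hgap by lra. exists u1, u0.
      split; [lra|split; [lra|split; [lra|]]]. intros y Hy. apply Hinti. lra.
Qed.

(** For singleton [AUC]-inputs [{t}] sharing a long prefix with [full_input], the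
    [j]-th approximation output by [H] at a common point [y] of two [K]-intervals is
    forced by [full_input] alone; so the two singletons are [2^(1-j)]-close. *)
Lemma shared_point_close j : exists N2, forall be be' t t' r r' y,
  rep AI_space be (fun x => x = t) -> rep AI_space be' (fun x => x = t') ->
  0 <= t <= 1 -> 0 <= t' <= 1 ->
  (forall i, (i < N2)%nat -> be i = 0%nat) -> (forall i, (i < N2)%nat -> be' i = 0%nat) ->
  kapp aK (bpair zeros be) r -> kapp aK (bpair zeros be') r' -> member r y -> member r' y ->
  Rabs (t - t') <= 2 / 2 ^ j.
Proof.
  destruct (output_cover (2 * j + 1) (fun _ => True)) as [Nd [etad [Hetad Hdigit]]]; [auto|].
  destruct (output_window etad Hetad) as [M HM].
  exists (Nat.max M Nd). intros be be' t t' r r' y Hbe Hbe' Ht Ht' Hz Hz' Hr Hr' Hy Hy'.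
  destruct (Hdigit y) as [w [_ Hw]];
    [apply (HM be r y); [intros i Hi; apply Hz; lia|exact Hr|exact Hy]|apply Hy|].
  assert (Happrox : forall be t r, rep AI_space be (fun x => x = t) -> 0 <= t <= 1 ->
            (forall i, (i < Nat.max M Nd)%nat -> be i = 0%nat) ->
            kapp aK (bpair zeros be) r -> member r y ->
            exists q, qcode w q /\ Rabs (q - t) <= / 2 ^ j).
  { clear - HW Hw. intros be t r Hbe Ht Hz Hr Hy.
    apply (forces_transfer _ _ (bpair zeros be)) in Hw;
      [|apply full_input_prefix; intros i Hi; apply Hz; lia].
    destruct (product_instance zeros be _ _ zeros_name_full_2 Hbe (ex_intro _ true I)
                (AUC_singleton_domain t Ht)) as [r1 [Hr1 [_ Hout]]].
    rewrite <- (kapp_unique _ _ _ _ Hr Hr1) in Hout.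
    destruct (forces_output _ _ _ _ _ _ _ Hw (fun nu Hnu => Hout nu y Hnu Hy))
      as [s [[c [y' [_ [_ [-> Hs]]]]] <-]].
    exact (Hs j). }
  destruct (Happrox be t r Hbe Ht Hz Hr Hy) as [q [Hq Hqt]].
  destruct (Happrox be' t' r' Hbe' Ht' Hz' Hr' Hy') as [q' [Hq' Hqt']].
  rewrite <- (qcode_fun _ _ _ Hq Hq') in Hqt'.
  replace (t - t') with ((q - t') - (q - t)) by ring.
  pose proof (Rabs_triang (q - t') (- (q - t))) as Htri. rewrite Rabs_Ropp in Htri.
  replace (2 / 2 ^ j) with (/ 2 ^ j + / 2 ^ j) by (field; apply pow_nonzero; lra).
  unfold Rminus at 1. lra.
Qed.

End FullInstance.

(** Feed [K] the singletons [{i/(m+2)}], [i <= m + 2], each hidden behind a long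
    prefix of [full_input]: their [K]-intervals are long (by [long_intervals]) and
    pairwise disjoint (by [shared_point_close]), too many to fit in [[0,1]]. *)
Lemma no_reduction : False.
Proof.
  destruct (product_instance zeros zeros _ _ zeros_name_full_2 zeros_name_full_I
              (ex_intro _ true I) AUC_full_domain)
    as [r0 [Hr0 [[a [b [[_ Hab] [_ Hint0]]]] Hout0]]].
  destruct (long_intervals r0 a b Hr0 Hab Hint0 Hout0) as [m [N1 Hlong]].
  set (M := S m). set (j := S (S M)).
  destruct (shared_point_close r0 a b Hr0 Hab Hint0 Hout0 j) as [N2 Hclose].
  set (N := Nat.max N1 N2).
  assert (Hprefix : forall i k, (k < N)%nat -> late_singleton i M N k = 0%nat)
    by (intros; now apply late_singleton_prefix).
  apply (few_long_disjoint_intervals m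
           (fun i y => exists r, kapp aK (bpair zeros (late_singleton i M N)) r /\ member r y)).
  - intros i Hi.
    destruct (product_instance zeros (late_singleton i M N) _ _ zeros_name_full_2
                (late_singleton_name i M N Hi) (ex_intro _ true I)
                (AUC_singleton_domain _ (grid_range i M Hi))) as [r [Hr _]].
    destruct (Hlong _ _ r (late_singleton_name i M N Hi)
                (AUC_singleton_domain _ (grid_range i M Hi))) as [lo [hi [Hlo [Hhi [Hd Hmem]]]]];
      [intros k Hk; apply Hprefix; lia|exact Hr|].
    exists lo, hi. repeat split; auto. intros y Hy. exists r. auto.
  - intros i i' y Hi Hi' [r [Hr Hy]] [r' [Hr' Hy']]. apply NNPP. intro Hne.
    pose proof (Hclose _ _ _ _ r r' y (late_singleton_name i M N Hi)
                  (late_singleton_name i' M N Hi') (grid_range i M Hi) (grid_range i' M Hi')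
                  ltac:(intros k Hk; apply Hprefix; lia) ltac:(intros k Hk; apply Hprefix; lia)
                  Hr Hr' Hy Hy') as Hnear.
    pose proof (grid_sep i i' M Hne) as Hfar.
    assert (Hsmall : 2 / 2 ^ j < / INR (S M)).
    { pose proof (pow2_ge M). pose proof (INR_S_pos M).
      change (2 ^ j) with (2 * (2 * 2 ^ M)).
      replace (2 / (2 * (2 * 2 ^ M))) with (/ (2 * 2 ^ M)) by (field; lra).
      apply Rinv_lt_contravar; [apply Rmult_lt_0_compat|]; lra. }
    lra.
Qed.

End ReductionOfProduct.

Theorem proposition17p3 : ~ Wred (prod_problem C2 AUC_I) ConC_I.
Proof.
  intros [aH [aK [_ [_ HW]]]]. exact (no_reduction aH aK HW).
Qed.
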